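(* If a graph $G$ contains a perfect matching, then $L(G)\le \frac{3}{2}\,l(G)$.
   Context: Graphs are finite, undirected, without loops or multiple edges. $\nu(G)$ denotes the maximum size of a matching of $G$; a matching is maximum if it has $\nu(G)$ edges. For $F\subseteq E(G)$, $G\setminus F$ is the graph with vertex set $V(G)$ and edge set $E(G)\setminus F$. Define $L(G)=\max\{\nu(G\setminus F): F \text{ a maximum matching of } G\}$ and $l(G)=\min\{\nu(G\setminus F): F \text{ a maximum matching of } G\}$. *)

(* A finite simple graph on vertex type T : finType is given
   by its edge set E : {set {set T}}, every edge being a 2-element vertex set. *)
From mathcomp Require Import all_boot.
Set Implicit Arguments. Unset Strict Implicit. Unset Printing Implicit Defensive.

Section Matchings.
Variable T : finType.

Definition simple_graph (E : {set {set T}}) : bool :=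
  [forall e in E, #|e| == 2].

Definition is_matching (E M : {set {set T}}) : bool :=
  (M \subset E) &&
  [forall e in M, forall f in M, (e != f) ==> [disjoint e & f]].

Definition nu (E : {set {set T}}) : nat :=
  \max_(M : {set {set T}} | is_matching E M) #|M|.

Definition is_max_matching (E M : {set {set T}}) : bool :=
  is_matching E M && (#|M| == nu E).

Definition has_perfect_matching (E : {set {set T}}) : Prop :=
  exists M, is_matching E M /\ cover M = [set: T].

Definition Lmax (E : {set {set T}}) : nat :=
  \max_(F : {set {set T}} | is_max_matching E F) nu (E :\: F).

(* The minimum over the
   (always nonempty) set of maximum matchings is computed with initial value
   nu E, which is an upper bound of every nu (E :\: F). *)
Definition lmin (E : {set {set T}}) : nat :=
  \big[minn/nu E]_(F : {set {set T}} | is_max_matching E F) nu (E :\: F).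

End Matchings.

From mathcomp Require Import all_boot zify.
Set Implicit Arguments. Unset Strict Implicit. Unset Printing Implicit Defensive.

(* Let F1, F2 be maximum matchings of G.  Since G has a perfect matching, F2
   is perfect.  For every matching M of G \ F2 we build a matching N of
   (M u F2) \ F1, a subgraph of G \ F1, with 2|M| <= 3|N|.  Hence
   2 nu(G \ F2) <= 3 nu(G \ F1) for all F1, F2, which is 2 L(G) <= 3 l(G).

   N comes from the exchange lemma [exchange]: if P and Q are edge-disjoint
   matchings of 2-element edges and R is any matching, then (P u Q) \ R
   contains a matching N with 2|P| <= 3|N| + |V(P) \ V(Q)|.  It is proved by
   strong induction on |P|.  [local_step] reduces the induction step to a
   choice, around an edge p = uv of P, of a vertex set X and of a matching
   S of (P u Q) \ R inside X: all edges of P and Q meeting X are deleted, the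
   induction hypothesis is applied to the rest and S is added.  The cost of
   this step is bounded by counting vertices: the deleted P-edges, and the
   vertices of V(P) newly exposed by deleting Q-edges ([orphans]).  Finally
   [dispatch] chooses X and S according to how u and v are covered by Q and
   which of the edges involved lie in R; there are five cases, each a local
   configuration of at most two P-edges and two Q-edges. *)

Section Exchange.
Variable T : finType.
Implicit Types (P Q R S N M : {set {set T}}) (X e f p : {set T}) (s : seq T).

Definition matching N := forall e f x, e \in N -> f \in N -> x \in e -> x \in f -> e = f.

Definition edges2 N := forall e, e \in N -> #|e| = 2.

Definition touching X : {set {set T}} := [set e : {set T} | ~~ [disjoint e & X]].

Definition exposed P Q := #|cover P :\: cover Q|.

(* vertices of V(P) outside X whose Q-edge meets X: they become exposed when
   the Q-edges touching X are deleted *)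
Definition orphans P Q X := [set x | (x \notin X) && (x \in cover P) &&
   [exists f in Q, (x \in f) && ~~ [disjoint f & X]]].

Definition edges_at P w := [set e in P | w \in e].
Definition partners Q y := [set x | [exists f in Q, (x \in f) && (y \in f)] && (x != y)].

Definition exchange_bound P Q R := exists N, [/\ matching N, N \subset (P :|: Q) :\: R &
   2 * #|P| <= 3 * #|N| + exposed P Q].

Lemma matching0 : matching set0.
Proof. by move=> e f x; rewrite inE. Qed.

Lemma matching_sub N M : M \subset N -> matching N -> matching M.
Proof. by move=> /subsetP sMN mN e f x /sMN eN /sMN fN; apply: mN. Qed.

Lemma edges2_sub N M : M \subset N -> edges2 N -> edges2 M.
Proof. by move=> /subsetP sMN tN e /sMN; apply: tN. Qed.

Lemma matching_disjoint N e f : matching N -> e \in N -> f \in N -> e != f ->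
  [disjoint e & f].
Proof.
move=> mN eN fN ef; rewrite -setI_eq0; apply/eqP/setP => x; rewrite !inE.
by apply/negbTE/negP => /andP[xe xf]; rewrite (mN _ _ _ eN fN xe xf) eqxx in ef.
Qed.

Lemma in_coverP P x : reflect (exists2 e, e \in P & x \in e) (x \in cover P).
Proof. by apply: (iffP bigcupP) => -[e]; exists e. Qed.

Lemma in_cover P e x : e \in P -> x \in e -> x \in cover P.
Proof. by move=> eP xe; apply/in_coverP; exists e. Qed.

Lemma cover_set2 e f : cover [set e; f] \subset e :|: f.
Proof. by apply/bigcupsP => g; rewrite !inE => /orP[]/eqP->; rewrite ?subsetUl ?subsetUr. Qed.

Lemma not_disjointI e X x : x \in e -> x \in X -> ~~ [disjoint e & X].
Proof. by move=> xe xX; apply/negP => /disjointFr /(_ xe); rewrite xX. Qed.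

Lemma edge2_other e y : #|e| = 2 -> y \in e -> exists2 z, z != y & e = [set y; z].
Proof.
move/eqP/cards2P => [a [b [ab ->]]]; rewrite !inE => /orP[]/eqP->.
  by exists b; rewrite // eq_sym.
by exists a; rewrite // setUC.
Qed.

Lemma edges_at_le1 P : matching P -> forall w, #|edges_at P w| <= 1.
Proof.
move=> mP w; apply/card_le1_eqP => e f; rewrite !inE => /andP[eP we] /andP[fP wf].
exact: mP _ _ _ fP eP wf we.
Qed.

Lemma partnersI Q f x y : f \in Q -> x \in f -> y \in f -> x != y -> x \in partners Q y.
Proof. by move=> fQ xf yf xy; rewrite inE xy andbT; apply/existsP; exists f; rewrite fQ xf yf. Qed.

Lemma partners_le1 Q : edges2 Q -> matching Q -> forall y, #|partners Q y| <= 1.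
Proof.
move=> tQ mQ y; apply/card_le1_eqP => x1 x2.
rewrite !inE => /andP[/existsP[f /and3P[fQ x1f yf]] x1y].
move=> /andP[/existsP[g /and3P[gQ x2g yg]] x2y].
rewrite (mQ _ _ _ gQ fQ yg yf) in x2g.
have [z zy fE] := edge2_other (tQ f fQ) yf.
by move: x1f x2g x1y x2y; rewrite fE !inE => /orP[]/eqP-> /orP[]/eqP->; rewrite ?eqxx.
Qed.

Lemma card_bigcup_seq_le (U : finType) (F : T -> {set U}) s :
  (forall w, #|F w| <= 1) -> #|\bigcup_(w <- s) F w| <= size s.
Proof.
move=> F1; elim: s => [|w s IH]; first by rewrite big_nil cards0.
rewrite big_cons; apply: leq_trans (leq_card_setU _ _).1 _.
exact: (leq_add (F1 w) IH).
Qed.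

Lemma touching_le P X (sP : seq T) : matching P ->
  (forall e y, e \in P -> y \in e -> y \in X -> exists2 w, w \in sP & w \in e) ->
  #|P :&: touching X| <= size sP.
Proof.
move=> mP hsP; apply: leq_trans (card_bigcup_seq_le sP (edges_at_le1 mP)).
apply: subset_leq_card; apply/subsetP => e; rewrite !inE => /andP[eP].
rewrite -setI_eq0 => /set0Pn[y]; rewrite inE => /andP[ye yX].
have [w wsP we] := hsP e y eP ye yX.
by rewrite bigcup_seq; apply/bigcupP; exists w; rewrite // inE eP we.
Qed.

Lemma orphans_le P Q X (sQ : seq T) : edges2 Q -> matching Q ->
  (forall f x y, f \in Q -> x \in f -> y \in f -> y \in X -> x \notin X ->
     x \in cover P -> y \in sQ) ->
  #|orphans P Q X| <= size sQ.
Proof.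
move=> tQ mQ hsQ; apply: leq_trans (card_bigcup_seq_le sQ (partners_le1 tQ mQ)).
apply: subset_leq_card; apply/subsetP => x.
rewrite inE => /andP[/andP[xX xP] /existsP[f /and3P[fQ xf]]].
rewrite -setI_eq0 => /set0Pn[y]; rewrite inE => /andP[yf yX].
rewrite bigcup_seq; apply/bigcupP; exists y; first exact: hsQ fQ xf yf yX xX xP.
by apply: partnersI fQ xf yf _; apply: contraNneq xX => ->.
Qed.

(* deleting the edges touching X exposes, outside X, only orphans *)
Lemma exposed_bound P Q X :
  exposed (P :\: touching X) (Q :\: touching X) + #|(cover P :\: cover Q) :&: X|
   <= exposed P Q + #|orphans P Q X|.
Proof.
rewrite /exposed; set A := cover P :\: cover Q.
have sub : cover (P :\: touching X) :\: cover (Q :\: touching X)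
    \subset (A :\: X) :|: orphans P Q X.
  apply/subsetP => x; rewrite inE => /andP[xnQ' /in_coverP [e]].
  rewrite !inE => /andP[eX eP] xe.
  have xX : x \notin X by apply: contraNN eX => xX; apply: not_disjointI xe xX.
  have xP := in_cover eP xe.
  rewrite xX xP /= andbT; case: (boolP (x \in cover Q)) => //= /in_coverP [f fQ xf].
  apply/existsP; exists f; rewrite fQ xf /=.
  by apply: contraNN xnQ' => fX; apply: (in_cover (e := f)); rewrite // !inE fQ fX.
have := subset_leq_card sub; have := (leq_card_setU (A :\: X) (orphans P Q X)).1.
have := cardsID X A; lia.
Qed.

Lemma matching_union N S X : matching N -> matching S ->
  (forall e, e \in N -> [disjoint e & X]) -> cover S \subset X -> matching (N :|: S).
Proof.
move=> mN mS dN /subsetP cSX e f x; rewrite !inE.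
have inX g y : g \in S -> y \in g -> y \in X by move=> gS yg; apply/cSX/(in_cover gS).
case/orP=> [eN|eS] /orP[fN|fS] xe xf.
- exact: mN _ _ _ eN fN xe xf.
- by move: (inX _ _ fS xf); rewrite (disjointFr (dN _ eN) xe).
- by move: (inX _ _ eS xe); rewrite (disjointFr (dN _ fN) xf).
- exact: mS _ _ _ eS fS xe xf.
Qed.

Lemma card_union_apart N S X : (forall e, e \in N -> [disjoint e & X]) ->
  cover S \subset X -> (forall e, e \in S -> e != set0) -> #|N :|: S| = #|N| + #|S|.
Proof.
move=> dN /subsetP cSX nS; apply/eqP; rewrite (leq_card_setU N S).2.
rewrite disjoints_subset; apply/subsetP => e eN; rewrite inE; apply/negP => eS.
have [x xe] := set0Pn _ (nS e eS).
by move: (cSX x (in_cover eS xe)); rewrite (disjointFr (dN _ eN) xe).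
Qed.

Section Step.
Variables (R : {set {set T}}) (n : nat).
Hypothesis mR : matching R.
Hypothesis IH : forall P Q, #|P| < n -> edges2 P -> edges2 Q -> matching P ->
  matching Q -> [disjoint P & Q] -> exchange_bound P Q R.
Variables P Q : {set {set T}}.
Hypotheses (Pn : #|P| <= n) (tP : edges2 P) (tQ : edges2 Q)
  (mP : matching P) (mQ : matching Q) (dPQ : [disjoint P & Q]).

Lemma PQ_false e : e \in P -> e \in Q -> False.
Proof. by move=> eP; rewrite (disjointFr dPQ eP). Qed.

Lemma R_not_both e f x : e \in P -> f \in Q -> e \in R -> f \in R ->
  x \in e -> x \in f -> False.
Proof. by move=> eP fQ eR fR xe xf; apply: (PQ_false eP); rewrite (mR eR fR xe xf). Qed.

(* Delete the edges touching X (which meets p), recurse, and add S.  The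
   deleted P-edges are counted through sP and the new exposed vertices through
   sQ; the last hypothesis is the balance of the step. *)
Lemma local_step S X p (sP sQ : seq T) : p \in P -> ~~ [disjoint p & X] ->
  S \subset (P :|: Q) :\: R -> matching S -> cover S \subset X ->
  (forall e y, e \in P -> y \in e -> y \in X -> exists2 w, w \in sP & w \in e) ->
  (forall f x y, f \in Q -> x \in f -> y \in f -> y \in X -> x \notin X ->
     x \in cover P -> y \in sQ) ->
  2 * size sP + size sQ <= 3 * #|S| + #|(cover P :\: cover Q) :&: X| ->
  exchange_bound P Q R.
Proof.
move=> pP pX sS mS cSX hsP hsQ balance.
have sP' : P :\: touching X \subset P := subsetDl _ _.
have sQ' : Q :\: touching X \subset Q := subsetDl _ _.
have ltP : #|P :\: touching X| < n.
  apply: leq_trans Pn; apply: proper_card; rewrite properE sP' /=.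
  by apply/subsetPn; exists p; rewrite // !inE pX.
have [N' [mN' sN' hN']] := IH ltP (edges2_sub sP' tP) (edges2_sub sQ' tQ)
  (matching_sub sP' mP) (matching_sub sQ' mQ) (disjointW sP' sQ' dPQ).
have dN e : e \in N' -> [disjoint e & X].
  by move/(subsetP sN'); rewrite !inE => /andP[_ /orP[]/andP[]/negbNE].
have nS e : e \in S -> e != set0.
  move/(subsetP sS); rewrite !inE -cards_eq0 => /andP[_ /orP[/tP|/tQ]] -> //.
exists (N' :|: S); split.
- exact: matching_union mN' mS dN cSX.
- by rewrite subUset sS andbT; apply: subset_trans sN' (setSD _ (setUSS sP' sQ')).
- rewrite (card_union_apart dN cSX nS).
  have := touching_le mP hsP; have := orphans_le tQ mQ hsQ.
  have := cardsID (touching X) P; have := exposed_bound P Q X; lia.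
Qed.

(* both endpoints of p are missed by Q: add nothing, the two exposed
   endpoints pay for p *)
Lemma case_exposed u v : [set u; v] \in P -> u != v ->
  u \notin cover Q -> v \notin cover Q -> exchange_bound P Q R.
Proof.
move=> pP uv uQ vQ.
apply: (local_step (S := set0) (X := [set u; v]) (sP := [:: u]) (sQ := [::]) pP).
- by apply: (not_disjointI (x := u)); rewrite !inE eqxx.
- exact: sub0set.
- exact: matching0.
- by apply/bigcupsP => e; rewrite inE.
- by move=> e y eP ye yp; exists u; rewrite ?inE ?eqxx // (mP eP pP ye yp) !inE eqxx.
- move=> f x y fQ _ yf; rewrite !inE => /orP[]/eqP yE; subst y;
    by rewrite (in_cover fQ yf) in uQ vQ.
- have pA : [set u; v] \subset (cover P :\: cover Q) :&: [set u; v].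
    rewrite subsetI subxx andbT; apply/subsetP => y.
    by rewrite !inE => /orP[]/eqP->; rewrite ?uQ ?vQ (in_cover pP) // !inE eqxx ?orbT.
  rewrite cards0 muln0 add0n; apply: leq_trans (subset_leq_card pA).
  by rewrite cards2 uv.
Qed.

(* p is not in R and u has no Q-partner in V(P): keep p *)
Lemma case_lonely u v : [set u; v] \in P -> [set u; v] \notin R ->
  (forall f x, f \in Q -> u \in f -> x \in f -> x \in cover P -> x = u) ->
  exchange_bound P Q R.
Proof.
move=> pP pR lone.
apply: (local_step (S := [set [set u; v]]) (X := [set u; v]) (sP := [:: u]) (sQ := [:: v]) pP).
- by apply: (not_disjointI (x := u)); rewrite !inE eqxx.
- by rewrite sub1set !inE pR pP.
- by apply: matching_sub mP; rewrite sub1set.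
- by rewrite cover1.
- by move=> e y eP ye yp; exists u; rewrite ?inE ?eqxx // (mP eP pP ye yp) !inE eqxx.
- move=> f x y fQ xf yf; rewrite !inE => /orP[]/eqP yE; subst y; rewrite ?eqxx // => xX xP.
  by rewrite (lone f x fQ yf xf xP) eqxx in xX.
- by rewrite cards1 /=; lia.
Qed.

(* p is in R, u has a Q-partner u' and v is missed by Q: keep the Q-edge uu' *)
Lemma case_in_R u v u' : [set u; v] \in P -> [set u; v] \in R ->
  [set u; u'] \in Q -> v \notin cover Q -> exchange_bound P Q R.
Proof.
move=> pP pR quQ vQ.
have quR : [set u; u'] \notin R.
  by apply/negP => quR; apply: (R_not_both (x := u) pP quQ pR quR); rewrite !inE eqxx.
have vP : v \in cover P by apply: in_cover pP _; rewrite !inE eqxx orbT.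
apply: (local_step (S := [set [set u; u']]) (X := [set u; u'] :|: [set u; v])
  (sP := [:: u; u']) (sQ := [::]) pP).
- by apply: (not_disjointI (x := u)); rewrite !inE eqxx ?orbT.
- by rewrite sub1set !inE quR quQ orbT.
- by apply: matching_sub mQ; rewrite sub1set.
- by rewrite cover1 subsetUl.
- move=> e y eP ye; rewrite !inE => /orP[]/orP[]/eqP yE; subst y.
  + by exists u; rewrite ?inE ?eqxx.
  + by exists u'; rewrite ?inE ?eqxx ?orbT.
  + by exists u; rewrite ?inE ?eqxx.
  + by exists u; rewrite ?inE ?eqxx // (mP eP pP ye) !inE eqxx ?orbT.
- move=> f x y fQ xf yf yX xX _.
  case: (boolP (y \in [set u; u'])) => [yq | ].
    move: xX; rewrite (mQ fQ quQ yf yq) in xf; move: xf.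
    by rewrite !inE => /orP[]/eqP->; rewrite eqxx ?orbT.
  move: yX; rewrite !inE => /orP[]/orP[]/eqP yE; subst y; rewrite ?eqxx ?orbT //.
  by rewrite (in_cover fQ yf) in vQ.
- have : 0 < #|(cover P :\: cover Q) :&: ([set u; u'] :|: [set u; v])|.
    by apply/card_gt0P; exists v; rewrite !inE vQ vP eqxx !orbT.
  by rewrite cards1 /=; lia.
Qed.

(* the Q-edges uu' and vv' at both endpoints of p avoid R: keep them *)
Lemma case_Q_outside_R u v u' v' : [set u; v] \in P -> u != v ->
  [set u; u'] \in Q -> [set v; v'] \in Q -> [set u; u'] \notin R -> [set v; v'] \notin R ->
  exchange_bound P Q R.
Proof.
move=> pP uv quQ qvQ quR qvR.
have quqv : [set u; u'] != [set v; v'].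
  apply/eqP => qE; have : v \in [set u; u'] by rewrite qE !inE eqxx.
  rewrite !inE eq_sym (negbTE uv) /= => /eqP vu'.
  by apply: (PQ_false pP); rewrite vu'.
apply: (local_step (S := [set [set u; u']; [set v; v']]) (X := [set u; u'] :|: [set v; v'])
  (sP := [:: u; u'; v']) (sQ := [::]) pP).
- by apply: (not_disjointI (x := u)); rewrite !inE eqxx.
- by apply/subsetP => e; rewrite !inE => /orP[]/eqP->; rewrite ?quQ ?qvQ ?quR ?qvR ?orbT.
- by apply: matching_sub mQ; rewrite subUset !sub1set quQ qvQ.
- exact: cover_set2.
- move=> e y eP ye; rewrite !inE => /orP[]/orP[]/eqP yE; subst y.
  + by exists u; rewrite ?inE ?eqxx.
  + by exists u'; rewrite ?inE ?eqxx ?orbT.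
  + by exists u; rewrite ?inE ?eqxx // (mP eP pP ye) !inE eqxx ?orbT.
  + by exists v'; rewrite ?inE ?eqxx ?orbT.
- move=> f x y fQ xf yf yX xX _; move: xX; rewrite in_setU.
  case/setUP: yX => yq.
    by rewrite -(mQ fQ quQ yf yq) xf.
  by rewrite -(mQ fQ qvQ yf yq) xf orbT.
- by rewrite cards2 quqv /=; lia.
Qed.

(* p is not in R, u has a Q-partner u' in R and u' lies on the P-edge u'u'':
   keep p and u'u'' *)
Lemma case_partner_in_P u v u' u'' : [set u; v] \in P -> [set u; v] \notin R ->
  [set u; u'] \in Q -> u' != u -> [set u; u'] \in R -> [set u'; u''] \in P ->
  exchange_bound P Q R.
Proof.
move=> pP pR quQ u'u quR rP.
have rR : [set u'; u''] \notin R.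
  apply/negP => rR; apply: (R_not_both (x := u') rP quQ rR quR); by rewrite !inE eqxx ?orbT.
have pr : [set u; v] != [set u'; u''].
  apply/eqP => pE; have : u' \in [set u; v] by rewrite pE !inE eqxx.
  rewrite !inE (negbTE u'u) /= => /eqP u'v.
  by apply: (PQ_false pP); rewrite -u'v.
apply: (local_step (S := [set [set u; v]; [set u'; u'']]) (X := [set u; v] :|: [set u'; u''])
  (sP := [:: u; u']) (sQ := [:: v; u'']) pP).
- by apply: (not_disjointI (x := u)); rewrite !inE eqxx.
- by rewrite subUset !sub1set !inE pR pP rR rP.
- by apply: matching_sub mP; rewrite subUset !sub1set pP rP.
- exact: cover_set2.
- move=> e y eP ye; case/setUP => yr.
    by exists u; rewrite ?inE ?eqxx // (mP eP pP ye yr) !inE eqxx.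
  by exists u'; rewrite ?inE ?eqxx ?orbT // (mP eP rP ye yr) !inE eqxx.
- move=> f x y fQ xf yf yX xX _.
  case: (boolP (y \in [set u; u'])) => [yq | ].
    move: xX; rewrite (mQ fQ quQ yf yq) in xf; move: xf.
    by rewrite !inE => /orP[]/eqP->; rewrite eqxx ?orbT.
  by move: yX; rewrite !inE => /orP[]/orP[]/eqP->; rewrite ?eqxx ?orbT.
- by rewrite cards2 pr /=; lia.
Qed.

(* a Q-edge uu' in R: either u' is unmatched by P, or it lies on a P-edge *)
Lemma case_Q_in_R u v u' : [set u; v] \in P -> [set u; u'] \in Q -> u' != u ->
  [set u; u'] \in R -> exchange_bound P Q R.
Proof.
move=> pP quQ u'u quR.
have pR : [set u; v] \notin R.
  by apply/negP => pR; apply: (R_not_both (x := u) pP quQ pR quR); rewrite !inE eqxx.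
case: (boolP (u' \in cover P)) => [/in_coverP [e eP u'e] | u'P].
  have [u'' _ eE] := edge2_other (tP eP) u'e; subst e.
  exact: case_partner_in_P pP pR quQ u'u quR eP.
apply: case_lonely pP pR _ => f x fQ uf xf xP.
have : x \in [set u; u'] by rewrite -(mQ fQ quQ uf) // !inE eqxx.
by rewrite !inE => /orP[]/eqP xE //; subst x; rewrite xP in u'P.
Qed.

Lemma dispatch p : p \in P -> exchange_bound P Q R.
Proof.
move=> pP; have /eqP/cards2P [u [v [uv pE]]] := tP pP; subst p.
have pP' : [set v; u] \in P by rewrite setUC.
have Q_edge w : w \in cover Q -> exists2 w', w' != w & [set w; w'] \in Q.
  by case/in_coverP => f fQ wf; have [w' w'w fE] := edge2_other (tQ fQ) wf; exists w'; rewrite -?fE.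
have lonely w : w \notin cover Q ->
    forall f x, f \in Q -> w \in f -> x \in f -> x \in cover P -> x = w.
  by move=> wQ f x fQ wf; rewrite (in_cover fQ wf) in wQ.
case: (boolP (u \in cover Q)) => [/Q_edge [u' u'u quQ] | uQ];
  case: (boolP (v \in cover Q)) => [/Q_edge [v' v'v qvQ] | vQ].
- case: (boolP ([set u; u'] \in R)) => quR; first exact: case_Q_in_R pP quQ u'u quR.
  case: (boolP ([set v; v'] \in R)) => qvR; first exact: case_Q_in_R pP' qvQ v'v qvR.
  exact: case_Q_outside_R pP uv quQ qvQ quR qvR.
- case: (boolP ([set u; v] \in R)) => pR; first exact: case_in_R pP pR quQ vQ.
  by apply: case_lonely pP' _ (lonely v vQ); rewrite setUC.
- case: (boolP ([set u; v] \in R)) => pR; last exact: case_lonely pP pR (lonely u uQ).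
  by apply: case_in_R pP' _ qvQ uQ; rewrite setUC.
- exact: case_exposed pP uv uQ vQ.
Qed.

End Step.

Lemma exchange R P Q : matching R -> edges2 P -> edges2 Q -> matching P ->
  matching Q -> [disjoint P & Q] -> exchange_bound P Q R.
Proof.
move=> mR; have [n] := ubnP #|P|; elim: n P Q => // n IHn P Q Pn tP tQ mP mQ dPQ.
case: (set_0Vmem P) => [P0 | [p pP]].
  by exists set0; split; [exact: matching0 | exact: sub0set | rewrite P0 cards0].
exact: (dispatch mR IHn Pn tP tQ mP mQ dPQ pP).
Qed.

End Exchange.

Section Main.
Variable T : finType.
Implicit Types (E M F : {set {set T}}).

Lemma is_matchingP E M : reflect (M \subset E /\ matching M) (is_matching E M).
Proof.
apply: (iffP andP) => -[sME hM]; split => //.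
  move=> e f x eM fM xe xf; apply/eqP/negPn/negP => ef.
  move/forallP/(_ e): hM; rewrite eM => /forallP/(_ f); rewrite fM ef /= => d.
  by rewrite (disjointFr d xe) in xf.
apply/forallP => e; apply/implyP => eM; apply/forallP => f; apply/implyP => fM.
by apply/implyP; apply: matching_disjoint hM eM fM.
Qed.

Lemma cover_card M : edges2 M -> matching M -> #|cover M| = 2 * #|M|.
Proof.
move=> tM mM.
have /eqP <- : trivIset M by apply/trivIsetP => A B AM BM; apply: matching_disjoint mM AM BM.
by rewrite (eq_bigr (fun _ => 2)) ?sum_nat_const 1?mulnC // => A /tM.
Qed.

Lemma nu_ge E M : is_matching E M -> #|M| <= nu E.
Proof. exact: (@leq_bigmax_cond _ (is_matching E) (fun M => #|M|) M). Qed.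

Lemma nu_mono E F : nu (E :\: F) <= nu E.
Proof.
apply/bigmax_leqP => M /is_matchingP [sM mM]; apply: nu_ge; apply/is_matchingP.
by split=> //; apply: subset_trans sM (subsetDl _ _).
Qed.

Variable E : {set {set T}}.
Hypothesis tE : edges2 E.
Hypothesis pm : has_perfect_matching E.

(* a maximum matching is as large as a perfect one, hence perfect *)
Lemma max_perfect F : is_max_matching E F -> cover F = setT.
Proof.
case/andP => /is_matchingP [sF mF] /eqP hF.
case: pm => M0 [hM0 cM0]; have /is_matchingP [sM0 mM0] := hM0.
apply/eqP; rewrite eqEcard subsetT /= -cM0.
rewrite (cover_card (edges2_sub sM0 tE) mM0) (cover_card (edges2_sub sF tE) mF) hF.
by rewrite leq_mul2l nu_ge.
Qed.

(* the exchange lemma with P a matching of G \ F2, Q = F2 (perfect, so that no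
   vertex of P is exposed) and R = F1 *)
Lemma nu_ratio F1 F2 : is_max_matching E F1 -> is_max_matching E F2 ->
  2 * nu (E :\: F2) <= 3 * nu (E :\: F1).
Proof.
move=> /andP[/is_matchingP [_ mF1] _] h2; have /andP[/is_matchingP [sF2 mF2] _] := h2.
apply: (big_ind (fun k => 2 * k <= 3 * nu (E :\: F1))) => //.
  by move=> x y hx hy; case: (leqP x y).
move=> M /is_matchingP [+ mM]; rewrite subsetD => /andP[sME dMF].
have [N [mN sN]] := exchange mF1 (edges2_sub sME tE) (edges2_sub sF2 tE) mM mF2 dMF.
rewrite /exposed (max_perfect h2) setDT cards0 addn0 => /leq_trans; apply.
rewrite leq_mul2l /=; apply: nu_ge; apply/is_matchingP; split => //.
by apply: subset_trans sN (setSD _ _); rewrite subUset sME.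
Qed.

Lemma Lmax_le F1 : is_max_matching E F1 -> 2 * Lmax E <= 3 * nu (E :\: F1).
Proof.
move=> h1; apply: (big_ind (fun k => 2 * k <= 3 * nu (E :\: F1))) => //.
- by move=> x y hx hy; case: (leqP x y).
- by move=> F2 h2; apply: nu_ratio.
Qed.

End Main.

Theorem theorem2 (T : finType) (E : {set {set T}}) :
  simple_graph E -> has_perfect_matching E -> 2 * Lmax E <= 3 * lmin E.
Proof.
move=> /forallP sg pm.
have tE : edges2 E by move=> e eE; apply/eqP; exact: (implyP (sg e) eE).
have L_le_nu : Lmax E <= nu E by apply/bigmax_leqP => F _; apply: nu_mono.
apply: (big_ind (fun k => 2 * Lmax E <= 3 * k)).
- by lia.
- by move=> x y hx hy; case: (leqP x y).
- by move=> F1; apply: Lmax_le.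
Qed.
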